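(* Let $R$ be a commutative local ring and $s\in R$. Then $A\in M_2(R;s)$ is strongly $J$-clean if and only if one of the following holds: (1) $A\in J\big(M_2(R;s)\big)$; (2) $I_2-A\in J\big(M_2(R;s)\big)$; (3) the $s$-characteristic polynomial $t^2-tr(A)t+\det_s(A)$ has a root in $J(R)$ and a root in $1+J(R)$.
   Context: A commutative ring $R$ is local if it has a unique maximal ideal $J(R)$ (its Jacobson radical); $J(T)$ denotes the Jacobson radical of a ring $T$. For a commutative ring $R$ and $s\in R$, $M_2(R;s)$ denotes the ring whose elements are the $2\times 2$ arrays $\left[\begin{smallmatrix} a&b\\ c&d\end{smallmatrix}\right]$ with $a,b,c,d\in R$, with componentwise addition and multiplication $\left[\begin{smallmatrix} a&b\\ c&d\end{smallmatrix}\right]\left[\begin{smallmatrix} a'&b'\\ c'&d'\end{smallmatrix}\right]=\left[\begin{smallmatrix} aa'+s^2bc'&ab'+bd'\\ ca'+dc'&s^2cb'+dd'\end{smallmatrix}\right]$, with identity $I_2$. For $A=\left[\begin{smallmatrix} a&b\\ c&d\end{smallmatrix}\right]$, $\det_s(A)=ad-s^2bc$ and $tr(A)=a+d$. An element $a$ of a ring $T$ is strongly $J$-clean if there is an idempotent $e\in T$ with $ae=ea$ and $a-e\in J(T)$. *)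

From HB Require Import structures.
From mathcomp Require Import all_boot all_order all_algebra.
From mathcomp Require Import ring.
Set Implicit Arguments. Unset Strict Implicit. Unset Printing Implicit Defensive.
Import Order.TTheory GRing.Theory Num.Theory.
Local Open Scope ring_scope.

Definition left_ideal (T : pzRingType) (I : T -> Prop) : Prop :=
  [/\ I 0, (forall x y, I x -> I y -> I (x + y)) & (forall r x, I x -> I (r * x))].

Definition maximal_left_ideal (T : pzRingType) (I : T -> Prop) : Prop :=
  [/\ left_ideal I, ~ I 1 &
      forall K : T -> Prop, left_ideal K -> ~ K 1 -> (forall x, I x -> K x) ->
        forall x, K x -> I x].

Definition jacobson (T : pzRingType) (x : T) : Prop :=
  forall I : T -> Prop, maximal_left_ideal I -> I x.

(* A commutative ring is local if it has a unique maximal ideal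
   (for commutative rings left ideals are the ideals). *)
Definition local_ring (R : comPzRingType) : Prop :=
  exists M : R -> Prop, maximal_left_ideal M /\
    forall N : R -> Prop, maximal_left_ideal N -> forall x, N x <-> M x.

Definition strongly_J_clean (T : pzRingType) (a : T) : Prop :=
  exists e : T, [/\ e * e = e, a * e = e * a & jacobson (a - e)].

Definition M2s (R : comNzRingType) (s : R) : Type := 'M[R]_2.
HB.instance Definition _ (R : comNzRingType) (s : R) :=
  GRing.Zmodule.on (M2s s).

Section M2s.
Variables (R : comNzRingType) (s : R).

Definition mx2 (a b c d : R) : M2s s :=
  \matrix_(i < 2, j < 2)
    if i == 0 :> nat then (if j == 0 :> nat then a else b)
    else (if j == 0 :> nat then c else d).

Definition m11 (A : M2s s) : R := (A : 'M[R]_2) 0 0.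
Definition m12 (A : M2s s) : R := (A : 'M[R]_2) 0 1.
Definition m21 (A : M2s s) : R := (A : 'M[R]_2) 1 0.
Definition m22 (A : M2s s) : R := (A : 'M[R]_2) 1 1.

Definition M2s_one : M2s s := mx2 1 0 0 1.

Definition M2s_mul (A B : M2s s) : M2s s :=
  mx2 (m11 A * m11 B + s ^+ 2 * m12 A * m21 B)
      (m11 A * m12 B + m12 A * m22 B)
      (m21 A * m11 B + m22 A * m21 B)
      (s ^+ 2 * m21 A * m12 B + m22 A * m22 B).

Lemma mx2_eta (A : M2s s) : A = mx2 (m11 A) (m12 A) (m21 A) (m22 A).
Proof.
apply/matrixP => i j; rewrite !mxE.
by case: i => [[|[|//]] ?]; case: j => [[|[|//]] ?];
   rewrite /m11 /m12 /m21 /m22; congr (A _ _); apply: val_inj.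
Qed.

Lemma mx2E a b c d :
  [/\ m11 (mx2 a b c d) = a, m12 (mx2 a b c d) = b,
      m21 (mx2 a b c d) = c & m22 (mx2 a b c d) = d].
Proof. by rewrite /m11 /m12 /m21 /m22 !mxE. Qed.

Lemma mx2_eq a b c d a' b' c' d' :
  a = a' -> b = b' -> c = c' -> d = d' -> mx2 a b c d = mx2 a' b' c' d'.
Proof. by move=> -> -> -> ->. Qed.

Lemma m_add (A B : M2s s) :
  [/\ m11 (A + B) = m11 A + m11 B, m12 (A + B) = m12 A + m12 B,
      m21 (A + B) = m21 A + m21 B & m22 (A + B) = m22 A + m22 B].
Proof. by rewrite /m11 /m12 /m21 /m22 !mxE. Qed.

Lemma M2s_mulA : associative M2s_mul.
Proof.
move=> A B C; rewrite /M2s_mul.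
case: (mx2E (m11 A * m11 B + s ^+ 2 * m12 A * m21 B) (m11 A * m12 B + m12 A * m22 B)
  (m21 A * m11 B + m22 A * m21 B) (s ^+ 2 * m21 A * m12 B + m22 A * m22 B)) => -> -> -> ->.
case: (mx2E (m11 B * m11 C + s ^+ 2 * m12 B * m21 C) (m11 B * m12 C + m12 B * m22 C)
  (m21 B * m11 C + m22 B * m21 C) (s ^+ 2 * m21 B * m12 C + m22 B * m22 C)) => -> -> -> ->.
by apply: mx2_eq; ring.
Qed.

Lemma M2s_mul1r : left_id M2s_one M2s_mul.
Proof.
move=> A; rewrite /M2s_mul /M2s_one; case: (mx2E 1 0 0 1) => -> -> -> ->.
by rewrite [RHS]mx2_eta; apply: mx2_eq; ring.
Qed.

Lemma M2s_mulr1 : right_id M2s_one M2s_mul.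
Proof.
move=> A; rewrite /M2s_mul /M2s_one; case: (mx2E 1 0 0 1) => -> -> -> ->.
by rewrite [RHS]mx2_eta; apply: mx2_eq; ring.
Qed.

Lemma m11_mx2 a b c d : m11 (mx2 a b c d) = a. Proof. by case: (mx2E a b c d). Qed.
Lemma m12_mx2 a b c d : m12 (mx2 a b c d) = b. Proof. by case: (mx2E a b c d). Qed.
Lemma m21_mx2 a b c d : m21 (mx2 a b c d) = c. Proof. by case: (mx2E a b c d). Qed.
Lemma m22_mx2 a b c d : m22 (mx2 a b c d) = d. Proof. by case: (mx2E a b c d). Qed.
Lemma m11D (A B : M2s s) : m11 (A + B) = m11 A + m11 B. Proof. by case: (m_add A B). Qed.
Lemma m12D (A B : M2s s) : m12 (A + B) = m12 A + m12 B. Proof. by case: (m_add A B). Qed.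
Lemma m21D (A B : M2s s) : m21 (A + B) = m21 A + m21 B. Proof. by case: (m_add A B). Qed.
Lemma m22D (A B : M2s s) : m22 (A + B) = m22 A + m22 B. Proof. by case: (m_add A B). Qed.

Lemma mx2_ext (A B : M2s s) : m11 A = m11 B -> m12 A = m12 B ->
  m21 A = m21 B -> m22 A = m22 B -> A = B.
Proof. by move=> *; rewrite (mx2_eta A) (mx2_eta B); apply: mx2_eq. Qed.

Lemma M2s_mulDl : left_distributive M2s_mul +%R.
Proof.
move=> A B C; apply: mx2_ext;
rewrite /M2s_mul ?m11D ?m12D ?m21D ?m22D ?m11_mx2 ?m12_mx2 ?m21_mx2 ?m22_mx2
        ?m11D ?m12D ?m21D ?m22D; ring.
Qed.

Lemma M2s_mulDr : right_distributive M2s_mul +%R.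
Proof.
move=> A B C; apply: mx2_ext;
rewrite /M2s_mul ?m11D ?m12D ?m21D ?m22D ?m11_mx2 ?m12_mx2 ?m21_mx2 ?m22_mx2
        ?m11D ?m12D ?m21D ?m22D; ring.
Qed.

End M2s.

HB.instance Definition _ (R : comNzRingType) (s : R) :=
  GRing.Zmodule_isPzRing.Build (M2s s)
    (@M2s_mulA R s) (@M2s_mul1r R s) (@M2s_mulr1 R s)
    (@M2s_mulDl R s) (@M2s_mulDr R s).

Definition trace2 (R : comNzRingType) (s : R) (A : M2s s) : R := m11 A + m22 A.
Definition det_s (R : comNzRingType) (s : R) (A : M2s s) : R :=
  m11 A * m22 A - s ^+ 2 * m12 A * m21 A.

Definition s_charpoly (R : comNzRingType) (s : R) (A : M2s s) : {poly R} :=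
  'X^2 - (trace2 A) *: 'X + (det_s A)%:P.

From HB Require Import structures.
From mathcomp Require Import all_boot all_order all_algebra.
From mathcomp Require Import ring.
From mathcomp Require Import boolp classical_sets.
Set Implicit Arguments.
Unset Strict Implicit.
Unset Printing Implicit Defensive.

Import GRing.Theory.
Local Open Scope ring_scope.

(* J(M_2(R;s)) consists of the matrices whose diagonal entries and s-multiples
   of off-diagonal entries lie in J(R): such matrices lie in the maximal left
   ideal of matrices with "first column in J(R)" and in its image under the
   swap involution, and conversely 1 - Y is invertible for such Y because its
   s-determinant is a unit.  Over a local ring an idempotent e is 0, 1, or has
   trace 1 and s-determinant 0; in the last case an A commuting with e acts on
   the corners e and 1 - e as scalars b and a, so A = a + (b - a) e has the
   eigenvalues a and b, and A - e in J forces a in J(R) and b in 1 + J(R).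
   Conversely such roots a, b make b - a a unit, and (A - a)/(b - a) is an
   idempotent commuting with A whose difference with A lies in J. *)

Section LeftIdeals.
Variable T : pzRingType.
Implicit Types (I K : T -> Prop) (x : T).

Definition proper_left_ideal_above I (B : set T) :=
  [/\ left_ideal B, ~ B 1 & (I `<=` B)%classic].

(* The empty set is admitted so that the empty chain has an upper bound. *)
Lemma bigcup_chain_proper_left_ideal I (F : set (set T)) :
  (forall B, F B -> B = set0 \/ proper_left_ideal_above I B) ->
  total_on F subset ->
  let U := (\bigcup_(B in F) B)%classic in U = set0 \/ proper_left_ideal_above I U.
Proof.
move=> FP Ftot U.
have FQ B a : F B -> B a -> proper_left_ideal_above I B.
  by move=> FB Ba; case: (FP B FB) => // B0; move: Ba; rewrite B0.
have [[B0 [a0 [FB0 B0a0]]]|nF] := pselect (exists B a, F B /\ B a); last first.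
  by left; apply/seteqP; split=> y // [B FB By]; apply: nF; exists B, y.
have [[B00 _ _] _ IB0] := FQ _ _ FB0 B0a0.
right; split; last 2 first.
- by case=> B FB B1; have [_ + _] := FQ _ _ FB B1; apply.
- by move=> y Iy; exists B0 => //; apply: IB0.
split; first by exists B0.
- move=> a b [B1 FB1 B1a] [B2 FB2 B2b].
  have [[_ D1 _] _ _] := FQ _ _ FB1 B1a; have [[_ D2 _] _ _] := FQ _ _ FB2 B2b.
  case: (Ftot _ _ FB1 FB2) => sub.
  + by exists B2 => //; apply: D2 => //; apply: sub.
  + by exists B1 => //; apply: D1 => //; apply: sub.
- by move=> r a [B FB Ba]; exists B => //; have [[_ _ BM] _ _] := FQ _ _ FB Ba; apply: BM.
Qed.

Lemma exists_maximal_left_ideal I : left_ideal I -> ~ I 1 ->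
  exists2 J, maximal_left_ideal J & forall x, I x -> J x.
Proof.
move=> HI nI1.
pose P B := B = set0 \/ proper_left_ideal_above I B.
have [J [PJ Jmax]] : exists J, P J /\ forall B, (J `<` B)%classic -> ~ P B.
  by apply: Zorn_bigcup => F FP; apply: bigcup_chain_proper_left_ideal.
have PI : P I by right; split.
case: PJ => [J0|[HJ nJ1 IJ]].
  exfalso; apply: (Jmax I _ PI); rewrite J0; split=> // sub.
  by have [I0 _ _] := HI; apply: (sub 0 I0).
exists J => //; split=> // K HK nK1 JK y Ky.
apply: contrapT => nJy; apply: (Jmax K); last by right; split=> // z /IJ /JK.
by split=> // KJ; apply: nJy; apply: KJ.
Qed.

Lemma jacobson_of_left_units x :
  (forall r, exists v, v * (1 - r * x) = 1) -> jacobson x.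
Proof.
move=> Hu I [[I0 ID IM] nI1 Imax]; apply: contrapT => nIx.
pose K z := exists i r, I i /\ z = i + r * x.
have HK : left_ideal K.
  split.
  - by exists 0, 0; rewrite mul0r addr0.
  - move=> a b [i1 [r1 [hi1 ->]]] [i2 [r2 [hi2 ->]]]; exists (i1 + i2), (r1 + r2).
    by split; [apply: ID | rewrite mulrDl addrACA].
  - move=> r a [i [r1 [hi ->]]]; exists (r * i), (r * r1).
    by split; [apply: IM | rewrite mulrDr mulrA].
have [i [r [Ii e1]]] : K 1.
  apply: contrapT => nK1; apply: nIx; apply: (Imax K HK nK1).
    by move=> z Iz; exists z, 0; rewrite mul0r addr0.
  by exists 0, 1; rewrite mul1r add0r.
have [v hv] := Hu r; apply: nI1; rewrite -hv; apply: IM.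
by rewrite e1 addrK.
Qed.

Lemma maximal_left_ideal_involution (f : T -> T) I :
  {morph f : x y / x + y} -> {morph f : x y / x * y} -> f 1 = 1 ->
  involutive f -> maximal_left_ideal I -> maximal_left_ideal (fun x => I (f x)).
Proof.
move=> fD fM f1 fK.
have f0 : f 0 = 0 by apply: (@addrI _ (f 0)); rewrite -fD !addr0.
have comp K : left_ideal K -> left_ideal (fun x => K (f x)).
  by case=> K0 KD KM; split=> [|x y|r x]; rewrite ?f0 ?fD ?fM; auto.
case=> HI nI1 Imax; split; [exact: comp | by rewrite f1 |].
move=> K HK nK1 IK x Kx; rewrite -[x]fK in Kx.
apply: (Imax (fun y => K (f y))) Kx; [exact: comp | by rewrite f1 |].
by move=> y Iy; apply: IK; rewrite fK.
Qed.

End LeftIdeals.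

Lemma eq0_of_mul_lunit (R : comPzRingType) (u x r : R) :
  u * x = 1 -> r * x = 0 -> r = 0.
Proof. by move=> ux rx; rewrite -[r]mulr1 -ux mulrCA rx mulr0. Qed.

Section M2sEntries.
Variables (R : comNzRingType) (s : R).
Implicit Types (X Y : M2s s) (r : R).

Lemma m11M X Y : m11 (X * Y) = m11 X * m11 Y + s ^+ 2 * m12 X * m21 Y.
Proof. exact: m11_mx2. Qed.
Lemma m12M X Y : m12 (X * Y) = m11 X * m12 Y + m12 X * m22 Y.
Proof. exact: m12_mx2. Qed.
Lemma m21M X Y : m21 (X * Y) = m21 X * m11 Y + m22 X * m21 Y.
Proof. exact: m21_mx2. Qed.
Lemma m22M X Y : m22 (X * Y) = s ^+ 2 * m21 X * m12 Y + m22 X * m22 Y.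
Proof. exact: m22_mx2. Qed.
Lemma m11_1 : m11 (1 : M2s s) = 1. Proof. exact: m11_mx2. Qed.
Lemma m12_1 : m12 (1 : M2s s) = 0. Proof. exact: m12_mx2. Qed.
Lemma m21_1 : m21 (1 : M2s s) = 0. Proof. exact: m21_mx2. Qed.
Lemma m22_1 : m22 (1 : M2s s) = 1. Proof. exact: m22_mx2. Qed.
Lemma m11N X : m11 (- X) = - m11 X. Proof. by rewrite /m11 mxE. Qed.
Lemma m12N X : m12 (- X) = - m12 X. Proof. by rewrite /m12 mxE. Qed.
Lemma m21N X : m21 (- X) = - m21 X. Proof. by rewrite /m21 mxE. Qed.
Lemma m22N X : m22 (- X) = - m22 X. Proof. by rewrite /m22 mxE. Qed.
Lemma m11_0 : m11 (0 : M2s s) = 0. Proof. by rewrite /m11 mxE. Qed.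
Lemma m12_0 : m12 (0 : M2s s) = 0. Proof. by rewrite /m12 mxE. Qed.
Lemma m21_0 : m21 (0 : M2s s) = 0. Proof. by rewrite /m21 mxE. Qed.
Lemma m22_0 : m22 (0 : M2s s) = 0. Proof. by rewrite /m22 mxE. Qed.

Definition scalar2 r : M2s s := mx2 s r 0 0 r.
Definition adj2 X : M2s s := mx2 s (m22 X) (- m12 X) (- m21 X) (m11 X).
Definition swap2 X : M2s s := mx2 s (m22 X) (m21 X) (m12 X) (m11 X).

Definition mE := (m11M, m12M, m21M, m22M, m11_1, m12_1, m21_1, m22_1,
  m11N, m12N, m21N, m22N, m11_0, m12_0, m21_0, m22_0,
  @m11D R s, @m12D R s, @m21D R s, @m22D R s,
  @m11_mx2 R s, @m12_mx2 R s, @m21_mx2 R s, @m22_mx2 R s).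

End M2sEntries.

Arguments adj2 {R s}.
Arguments swap2 {R s}.

Ltac mx2_ring :=
  apply: mx2_ext; rewrite /scalar2 /adj2 /swap2 /trace2 /det_s !mE; ring.

Section M2sAlgebra.
Variables (R : comNzRingType) (s : R).
Implicit Types (X Y A e : M2s s) (a b r : R).

Lemma scalar2_0 : scalar2 s 0 = 0. Proof. by mx2_ring. Qed.
Lemma scalar2_1 : scalar2 s 1 = 1. Proof. by mx2_ring. Qed.

Lemma scalar2M a b : scalar2 s a * scalar2 s b = scalar2 s (a * b).
Proof. by mx2_ring. Qed.

Lemma trace2D X Y : trace2 (X + Y) = trace2 X + trace2 Y.
Proof. by rewrite /trace2 !mE; ring. Qed.
Lemma trace2N X : trace2 (- X) = - trace2 X.
Proof. by rewrite /trace2 !mE; ring. Qed.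
Lemma trace2_1 : trace2 (1 : M2s s) = 1 + 1.
Proof. by rewrite /trace2 !mE. Qed.
Lemma trace2_scale r X : trace2 (scalar2 s r * X) = r * trace2 X.
Proof. by rewrite /trace2 /scalar2 !mE; ring. Qed.

Lemma det_sM X Y : det_s (X * Y) = det_s X * det_s Y.
Proof. by rewrite /det_s !mE; ring. Qed.

Lemma adj2_mul X : adj2 X * X = scalar2 s (det_s X).
Proof. by mx2_ring. Qed.

Lemma M2s_cayley_hamilton X : X * X = scalar2 s (trace2 X) * X - scalar2 s (det_s X).
Proof. by mx2_ring. Qed.

Lemma M2s_polarization X Y : X * Y + Y * X =
  scalar2 s (trace2 X) * Y + scalar2 s (trace2 Y) * X
  - scalar2 s (trace2 X * trace2 Y - trace2 (X * Y)).
Proof. by mx2_ring. Qed.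

Lemma swap2D : {morph @swap2 R s : X Y / X + Y}. Proof. by move=> X Y; mx2_ring. Qed.
Lemma swap2M : {morph @swap2 R s : X Y / X * Y}. Proof. by move=> X Y; mx2_ring. Qed.
Lemma swap2_1 : swap2 (1 : M2s s) = 1. Proof. by mx2_ring. Qed.
Lemma swap2K : involutive (@swap2 R s). Proof. by move=> X; mx2_ring. Qed.

Lemma mul_idem_trace1 A e : e * e = e -> A * e = e * A -> trace2 e = 1 ->
  A * e = scalar2 s (trace2 (A * e)) * e.
Proof.
move=> ee Ae te; have := M2s_polarization e (A * e).
have eAe : e * (A * e) = A * e by rewrite mulrA -Ae -mulrA ee.
rewrite eAe -mulrA ee te mul1r subrr scalar2_0 subr0 scalar2_1 mul1r.
by move/addrI.
Qed.

Lemma trace2_scalar_add a r e :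
  trace2 (scalar2 s a + scalar2 s r * e) = a + a + r * trace2 e.
Proof. by rewrite /trace2 /scalar2 !mE; ring. Qed.

Lemma det_s_scalar_add a r e :
  det_s (scalar2 s a + scalar2 s r * e) = a ^+ 2 + a * r * trace2 e + r ^+ 2 * det_s e.
Proof. by rewrite /trace2 /det_s /scalar2 !mE; ring. Qed.

Lemma mul_scalar_sub A a b : (A - scalar2 s a) * (A - scalar2 s b) =
  scalar2 s (trace2 A - (a + b)) * A + scalar2 s (a * b - det_s A).
Proof. by mx2_ring. Qed.

Lemma root_s_charpoly A x :
  root (s_charpoly A) x = (x ^+ 2 - trace2 A * x + det_s A == 0).
Proof.
by rewrite /root /s_charpoly !(hornerD, hornerN, hornerZ, hornerX, hornerXn, hornerC).
Qed.

Lemma roots_of_trace_det A a b : trace2 A = a + b -> det_s A = a * b ->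
  root (s_charpoly A) a /\ root (s_charpoly A) b.
Proof. by move=> tA dA; rewrite !root_s_charpoly tA dA; split; apply/eqP; ring. Qed.

Lemma trace_det_of_roots A a b u : u * (b - a) = 1 ->
  root (s_charpoly A) a -> root (s_charpoly A) b ->
  trace2 A = a + b /\ det_s A = a * b.
Proof.
rewrite !root_s_charpoly => hu /eqP ra /eqP rb.
have tA : trace2 A = a + b.
  apply/esym/subr0_eq; apply: (eq0_of_mul_lunit hu).
  have -> : (a + b - trace2 A) * (b - a) =
    (b ^+ 2 - trace2 A * b + det_s A) - (a ^+ 2 - trace2 A * a + det_s A) by ring.
  by rewrite ra rb subrr.
split=> //; apply: subr0_eq.
have -> : det_s A - a * b = (a ^+ 2 - trace2 A * a + det_s A) + a * (trace2 A - (a + b))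
  by ring.
by rewrite ra tA subrr mulr0 addr0.
Qed.

End M2sAlgebra.

Section LocalRing.
Variables (R : comNzRingType) (M : R -> Prop).
Hypothesis max_M : maximal_left_ideal M.
Hypothesis M_unique :
  forall N : R -> Prop, maximal_left_ideal N -> forall x, N x <-> M x.
Implicit Types (a b r u x y z : R).

Lemma M0 : M 0. Proof. by case: max_M => [[]]. Qed.
Lemma MD x y : M x -> M y -> M (x + y). Proof. by case: max_M => [[_ + _] _ _]; apply. Qed.
Lemma MMl r x : M x -> M (r * x). Proof. by case: max_M => [[_ _ +] _ _]; apply. Qed.
Lemma M1 : ~ M 1. Proof. by case: max_M. Qed.
Lemma MN x : M x -> M (- x). Proof. by move=> Mx; rewrite -mulN1r; apply: MMl. Qed.
Lemma MB x y : M x -> M y -> M (x - y). Proof. by move=> Mx /MN; apply: MD. Qed.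

Lemma M_lincomb2 a b x y z : M x -> M y -> z = a * x + b * y -> M z.
Proof. by move=> Mx My ->; apply: MD; apply: MMl. Qed.
Arguments M_lincomb2 a b {x y z}.

Lemma unit_of_notM x : ~ M x -> exists u, u * x = 1.
Proof.
move=> nMx; apply: contrapT => nu.
pose P z := exists r, z = r * x.
have HP : left_ideal P.
  split; first by exists 0; rewrite mul0r.
  - by move=> _ _ [a ->] [b ->]; exists (a + b); rewrite mulrDl.
  - by move=> r _ [a ->]; exists (r * a); rewrite mulrA.
have [|N maxN PN] := exists_maximal_left_ideal HP.
  by case=> r r1; apply: nu; exists r.
by apply/nMx/(M_unique maxN)/PN; exists 1; rewrite mul1r.
Qed.

Lemma unit_of_M_sub1 x : M (x - 1) -> exists u, u * x = 1.
Proof.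
move=> Mx1; apply: unit_of_notM => Mx; apply: M1.
by rewrite -[1](subKr x); apply: MB.
Qed.

Lemma jacobson_local x : jacobson x <-> M x.
Proof. by split=> [/(_ M max_M) | Mx I maxI]; last apply/(M_unique maxI). Qed.

Lemma local_idempotent r : r * r = r -> r = 0 \/ r = 1.
Proof.
move=> rr; have r1r : (1 - r) * r = 0 by rewrite mulrBl mul1r rr subrr.
have [Mr|nMr] := pselect (M r).
  left; have [u hu] : exists u, u * (1 - r) = 1.
    by apply: unit_of_M_sub1; rewrite addrAC subrr add0r; apply: MN.
  by apply: (eq0_of_mul_lunit hu); rewrite mulrC.
have [u hu] := unit_of_notM nMr.
by right; apply/esym/subr0_eq; apply: (eq0_of_mul_lunit hu).
Qed.

Variable s : R.
Implicit Types (X Y A e : M2s s).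

Definition jac_mx X := [/\ M (m11 X), M (m22 X), M (s * m12 X) & M (s * m21 X)].

Lemma jac_mxD X Y : jac_mx X -> jac_mx Y -> jac_mx (X + Y).
Proof.
by case=> ? ? ? ? [? ? ? ?]; split; rewrite !mE ?mulrDr; apply: MD.
Qed.

Lemma jac_mxN X : jac_mx X -> jac_mx (- X).
Proof. by case=> ? ? ? ?; split; rewrite !mE ?mulrN; apply: MN. Qed.

Lemma jac_mx_mull Y X : jac_mx X -> jac_mx (Y * X).
Proof.
case=> h11 h22 h12 h21; split; rewrite !mE.
- by apply: (M_lincomb2 (m11 Y) (m12 Y * s) h11 h21); ring.
- by apply: (M_lincomb2 (m21 Y * s) (m22 Y) h12 h22); ring.
- by apply: (M_lincomb2 (m11 Y) (s * m12 Y) h12 h22); ring.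
- by apply: (M_lincomb2 (s * m21 Y) (m22 Y) h11 h21); ring.
Qed.

Lemma jac_mx_mulr X Y : jac_mx X -> jac_mx (X * Y).
Proof.
case=> h11 h22 h12 h21; split; rewrite !mE.
- by apply: (M_lincomb2 (m11 Y) (s * m21 Y) h11 h12); ring.
- by apply: (M_lincomb2 (s * m12 Y) (m22 Y) h21 h22); ring.
- by apply: (M_lincomb2 (s * m12 Y) (m22 Y) h11 h12); ring.
- by apply: (M_lincomb2 (m11 Y) (s * m21 Y) h21 h22); ring.
Qed.

Lemma jac_mx_scalar a : M a -> jac_mx (scalar2 s a).
Proof. by move=> Ma; split; rewrite /scalar2 !mE ?mulr0 //; apply: M0. Qed.

Lemma trace2_mul_jac X Y : jac_mx X -> M (trace2 (X * Y)).
Proof. by case/(jac_mx_mulr Y) => h11 h22 _ _; apply: MD. Qed.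

Lemma jac_mx_unit1B Y : jac_mx Y -> exists V, V * (1 - Y) = 1.
Proof.
case=> h11 h22 h12 h21.
have [v hv] : exists v, v * det_s (1 - Y) = 1.
  apply: unit_of_M_sub1.
  have -> : det_s (1 - Y) - 1 =
    ((m22 Y - 1) * m11 Y + (- (s * m12 Y)) * (s * m21 Y)) - m22 Y.
    by rewrite /det_s !mE; ring.
  by apply: (MB _ h22); exact: (M_lincomb2 (m22 Y - 1) (- (s * m12 Y)) h11 h21).
exists (scalar2 s v * adj2 (1 - Y)).
by rewrite -mulrA adj2_mul scalar2M hv scalar2_1.
Qed.

Definition col_ideal X := M (m11 X) /\ M (s * m21 X).

Lemma col_ideal_left : left_ideal col_ideal.
Proof.
split; first by rewrite /col_ideal !mE mulr0; split; apply: M0.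
- by move=> X Y [? ?] [? ?]; rewrite /col_ideal !mE mulrDr; split; apply: MD.
- move=> Y X [h11 h21]; rewrite /col_ideal !mE; split.
  + by apply: (M_lincomb2 (m11 Y) (m12 Y * s) h11 h21); ring.
  + by apply: (M_lincomb2 (s * m21 Y) (m22 Y) h11 h21); ring.
Qed.

Lemma col_ideal_one (K : M2s s -> Prop) Z : left_ideal K ->
  (forall W, m11 W = 0 -> m21 W = 0 -> K W) -> K Z -> ~ M (m11 Z) -> K 1.
Proof.
case=> _ KD KM K0 KZ nMZ; have [u hu] := unit_of_notM nMZ.
rewrite -(subrK (mx2 s u 0 0 0 * Z) 1); apply: KD; last exact: KM.
by apply: K0; rewrite !mE; [rewrite -hu |]; ring.
Qed.

Lemma maximal_col_ideal : maximal_left_ideal col_ideal.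
Proof.
split; [exact: col_ideal_left | by rewrite /col_ideal m11_1 => -[/M1] |].
move=> K HK nK1 colK Z KZ; apply: contrapT => nZ; apply: nK1.
have K0 W : m11 W = 0 -> m21 W = 0 -> K W.
  by move=> h11 h21; apply: colK; rewrite /col_ideal h11 h21 mulr0; split; apply: M0.
have [M11|nM11] := pselect (M (m11 Z)); last exact: col_ideal_one HK K0 KZ nM11.
have nM21 : ~ M (s * m21 Z) by move=> M21; apply: nZ.
have [u hu] := unit_of_notM nM21.
have [v hv] : exists v, v * s = 1.
  by apply: unit_of_notM => Ms; apply: nM21; rewrite mulrC; apply: MMl.
have [_ _ KM] := HK.
apply: (col_ideal_one HK K0 (KM (mx2 s 0 (u * v) 0 0) _ KZ)); rewrite !mE.
have -> : 0 * m11 Z + s ^+ 2 * (u * v) * m21 Z = (u * (s * m21 Z)) * (v * s) by ring.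
by rewrite hu hv mulr1; apply: M1.
Qed.

Lemma jacobson_M2s X : jacobson X <-> jac_mx X.
Proof.
split=> jX.
  have [h11 h21] := jX _ maximal_col_ideal.
  have := jX _ (maximal_left_ideal_involution (@swap2D R s) (@swap2M R s)
                 (@swap2_1 R s) (@swap2K R s) maximal_col_ideal).
  by rewrite /col_ideal /swap2 !mE => -[h22 h12].
by apply: jacobson_of_left_units => r; apply/jac_mx_unit1B/jac_mx_mull.
Qed.

Lemma idempotent_M2s e : e * e = e ->
  [\/ e = 0, e = 1 | trace2 e = 1 /\ det_s e = 0].
Proof.
move=> ee.
have CH : e = scalar2 s (trace2 e) * e - scalar2 s (det_s e).
  by rewrite -{1}ee M2s_cayley_hamilton.
have dd : det_s e * det_s e = det_s e by rewrite -det_sM ee.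
have [d0|d1] := local_idempotent dd.
  rewrite d0 scalar2_0 subr0 in CH.
  have tt : trace2 e * trace2 e = trace2 e by rewrite -trace2_scale -CH.
  have [t0|t1] := local_idempotent tt; last by constructor 3.
  by constructor 1; rewrite CH t0 scalar2_0 mul0r.
constructor 2; have := adj2_mul e; rewrite d1 scalar2_1 => ae.
have : adj2 e * (e * e) = adj2 e * e by rewrite ee.
by rewrite mulrA ae mul1r.
Qed.

Lemma split_roots_of_corner A e : e * e = e -> A * e = e * A ->
  trace2 e = 1 -> det_s e = 0 -> jac_mx (A - e) ->
  exists a b, [/\ M a, M (b - 1), trace2 A = a + b & det_s A = a * b].
Proof.
move=> ee Ae te de jAe.
have ff : (1 - e) * (1 - e) = 1 - e.
  by rewrite mulrBr mulr1 mulrBl mul1r ee subrr subr0.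
have Af : A * (1 - e) = (1 - e) * A by rewrite mulrBr mulrBl mulr1 mul1r Ae.
have tf : trace2 (1 - e) = 1 by rewrite trace2D trace2N trace2_1 te; ring.
have ef : e * (1 - e) = 0 by rewrite mulrBr mulr1 ee subrr.
have hf := mul_idem_trace1 ff Af tf; have he := mul_idem_trace1 ee Ae te.
have Ma : M (trace2 (A * (1 - e))).
  by rewrite -[A * _]subr0 -ef -mulrBl; apply: trace2_mul_jac.
have Mb : M (trace2 (A * e) - 1).
  by rewrite -te -trace2N -trace2D -{2}ee -mulrBl; apply: trace2_mul_jac.
move: (trace2 (A * (1 - e))) (trace2 (A * e)) hf he Ma Mb => a b hf he Ma Mb.
have hA : A = scalar2 s a + scalar2 s (b - a) * e.
  by rewrite -{1}[A]mulr1 -(subrK e 1) mulrDr hf he; mx2_ring.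
exists a, b; split=> //; rewrite hA.
  by rewrite trace2_scalar_add te; ring.
by rewrite det_s_scalar_add te de; ring.
Qed.

Lemma strongly_J_clean_of_roots A a b : M a -> M (b - 1) ->
  root (s_charpoly A) a -> root (s_charpoly A) b -> strongly_J_clean A.
Proof.
move=> Ma Mb ra rb.
have [u hu] : exists u, u * (b - a) = 1.
  by apply: unit_of_M_sub1; rewrite addrAC; apply: MB.
have [tA dA] := trace_det_of_roots hu ra rb.
have Z : (A - scalar2 s a) * (A - scalar2 s b) = 0.
  by rewrite mul_scalar_sub tA dA !subrr scalar2_0 mul0r addr0.
have Mu : M (1 - u).
  have -> : 1 - u = u * ((b - 1) - a) by rewrite -{1}hu; ring.
  exact/MMl/MB.
exists (scalar2 s u * (A - scalar2 s a)); split.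
- have -> : scalar2 s u * (A - scalar2 s a) * (scalar2 s u * (A - scalar2 s a)) =
    scalar2 s (u * u) * ((A - scalar2 s a) * (A - scalar2 s b))
    + scalar2 s (u * u * (b - a)) * (A - scalar2 s a) by mx2_ring.
  by rewrite Z mulr0 add0r -mulrA hu mulr1.
- by mx2_ring.
- have -> : A - scalar2 s u * (A - scalar2 s a) =
    scalar2 s (1 - u) * A + scalar2 s (u * a) by mx2_ring.
  apply/jacobson_M2s/jac_mxD; first by apply/jac_mx_mulr/jac_mx_scalar.
  by apply/jac_mx_scalar/MMl.
Qed.

Lemma strongly_J_clean_M2s A : strongly_J_clean A <->
  [\/ jacobson A, jacobson (1 - A)
    | (exists2 a, jacobson a & root (s_charpoly A) a) /\
      (exists2 b, jacobson (b - 1) & root (s_charpoly A) b)].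
Proof.
split.
  case=> e [ee Ae jAe]; have [e0|e1|[te de]] := idempotent_M2s ee.
  - by constructor 1; rewrite -[A]subr0 -e0.
  - constructor 2; apply/jacobson_M2s; rewrite -opprB -e1.
    exact/jac_mxN/jacobson_M2s.
  - have [a [b [Ma Mb tA dA]]] :=
      split_roots_of_corner ee Ae te de (proj1 (jacobson_M2s _) jAe).
    have [ra rb] := roots_of_trace_det tA dA.
    by constructor 3; split; [exists a | exists b] => //; apply/jacobson_local.
case=> [jA | j1A | [[a ja ra] [b jb rb]]].
- by exists 0; split; rewrite ?mulr0 ?mul0r ?subr0.
- exists 1; split; rewrite ?mulr1 ?mul1r //.
  by apply/jacobson_M2s; rewrite -opprB; exact/jac_mxN/jacobson_M2s.
- by apply: (strongly_J_clean_of_roots _ _ ra rb); apply/jacobson_local.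
Qed.

End LocalRing.

Theorem theorem3p6 (R : comNzRingType) (s : R) (A : M2s s) :
  local_ring R ->
  (strongly_J_clean A <->
   [\/ jacobson A,
       jacobson (1 - A)
     | (exists2 a : R, jacobson a & root (s_charpoly A) a) /\
       (exists2 b : R, jacobson (b - 1) & root (s_charpoly A) b)]).
Proof. by case=> M [max_M M_unique]; exact: (strongly_J_clean_M2s max_M M_unique). Qed.
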